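(* Let $\sigma$ be a finite sequence of transitions such that $G_\sigma$ has no negative cycle, and let $n=|X|$. If $\sigma$ does not admit a pattern, then for every pair $(x,y)\in X\times X$ for which some complete p-tree with root labelled $(x,y)$ exists, there is a complete p-tree with root labelled $(x,y)$ of height at most $n^2$ whose weight is less than or equal to the weight of every complete p-tree with root labelled $(x,y)$.
   Context: Fix a finite set of clocks $X=\{x_0,\dots,x_m\}$ and a finite sequence $\sigma$ of timed-automaton transitions over $X$. A weight is a pair $(\preccurlyeq,d)$ with $\preccurlyeq\in\{<,\le\}$, $d\in\mathbb{Z}$; weights are added by $(\preccurlyeq_1,d_1)+(\preccurlyeq_2,d_2)=(\preccurlyeq,d_1+d_2)$, $\preccurlyeq$ being $<$ iff one of $\preccurlyeq_1,\preccurlyeq_2$ is $<$, and totally ordered by $(\preccurlyeq,d)<(\preccurlyeq',d')$ iff $d<d'$, or $d=d'$, $\preccurlyeq$ is $<$ and $\preccurlyeq'$ is $\le$. A weight is negative if it is smaller than $(\le,0)$. $G_\sigma$ is the transformation graph of $\sigma$ (a directed graph with weighted edges on vertex set $\{0,\dots,k\}\times X$ encoding time elapse, guards and resets of the transitions of $\sigma$). For a graph $G$ on $\{0,\dots,k\}\times X$ without negative cycles, its canonical form has an edge $u\to w$ for each pair of distinct vertices joined by a path, weighted by the minimal path weight, and $|G|$ is the canonical form restricted to columns $0$ and $k$, renumbered $0$ and $1$. p-trees (relative to $H=|G_\sigma|$): a p-tree is a finite rooted tree with weighted edges whose nodes are labelled by $\top$ or by pairs $(x,y)\in X\times X$; nodes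 labelled $\top$ are leaves. A node labelled $(x,y)$ has children of exactly one of the following forms: (a) a single child $\top$, with edge weight $e$, where $H$ has an edge $(c,x)\to(c,y)$ of weight $e$ for some $c\in\{0,1\}$; (b) a single child $(u,v)$, with edge weight $e_1+e_2$, where for some $c,c'\in\{0,1\}$ with $c\ne c'$, $H$ has edges $(c,x)\to(c',u)$ of weight $e_1$ and $(c',v)\to(c,y)$ of weight $e_2$; (c) two children $(x,z)$ and $(z,y)$ for some $z\in X$, both with edge weight $(\le,0)$. The weight of a p-tree is the sum of all its edge weights. A p-tree is complete if all leaves are labelled $\top$. The height of a tree is the maximal number of edges on a root-to-leaf path. An $(x,y)$-$(u,v)$ context is a p-tree with root labelled $(x,y)$ all of whose leaves are labelled $\top$ except exactly one leaf labelled $(u,v)$. A pattern is an $(x,y)$-$(x,y)$ context of negative weight; $\sigma$ admits a pattern if one exists. *)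

From HB Require Import structures.
From mathcomp Require Import all_boot all_order all_algebra.
Set Implicit Arguments. Unset Strict Implicit. Unset Printing Implicit Defensive.
Import Order.TTheory GRing.Theory Num.Theory.

(* Weights (prec, d): the boolean is [true] for "<" and [false] for "<=". *)
Definition weight := (bool * int)%type.

Definition wzero : weight := (false, 0%R).

Definition wadd (a b : weight) : weight := (a.1 || b.1, (a.2 + b.2)%R).

Definition wlt (a b : weight) : bool :=
  ((a.2 < b.2)%R) || ((a.2 == b.2) && a.1 && ~~ b.1).
Definition wle (a b : weight) : bool := wlt a b || (a == b).
Definition wneg (a : weight) : bool := wlt a wzero.

(* Timed-automaton transitions over a finite set of clocks X, with the  *)
(* reference clock x0.  A guard is a list of atomic constraints          *)
(* (x, y, (prec,d)) meaning  x - y prec d  (x0 stands for the constant 0). *)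
Record transition (X : finType) := Transition {
  guard : seq (X * X * weight);
  reset : {set X}
}.

Section Graph.
Variables (X : finType) (x0 : X) (sigma : seq (transition X)).
Local Notation k := (size sigma).
Definition vertex := ('I_k.+1 * X)%type.

Definition col_prev (i : 'I_k) : 'I_k.+1 := widen_ord (leqnSn k) i.
Definition col_next (i : 'I_k) : 'I_k.+1 := lift ord0 i.
Definition trans_at (i : 'I_k) : transition X := tnth (in_tuple sigma) i.

(* vertex carrying clock x at the moment the guard of transition i is
   checked (after time elapse, before reset) *)
Definition guard_vertex (i : 'I_k) (x : X) : vertex :=
  if x == x0 then (col_next i, x0) else (col_prev i, x).

(* An edge u -> w of weight (prec,d) encodes the
   constraint  val(u) - val(w) prec d, where val(j,x) (x <> x0) is minus the
   absolute date of the last reset of x at position j and val(j,x0) is minus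
   the current absolute date at position j (so clock x = val(j,x) - val(j,x0)).
   Transition i goes from column i to column i+1: time elapse, guard, reset. *)
Inductive Gsigma : vertex -> vertex -> weight -> Prop :=
| GS_elapse (i : 'I_k) :
    Gsigma (col_next i, x0) (col_prev i, x0) wzero
| GS_keep_fw (i : 'I_k) (x : X) : x != x0 -> x \notin reset (trans_at i) ->
    Gsigma (col_prev i, x) (col_next i, x) wzero
| GS_keep_bw (i : 'I_k) (x : X) : x != x0 -> x \notin reset (trans_at i) ->
    Gsigma (col_next i, x) (col_prev i, x) wzero
| GS_reset_fw (i : 'I_k) (x : X) : x != x0 -> x \in reset (trans_at i) ->
    Gsigma (col_next i, x) (col_next i, x0) wzero
| GS_reset_bw (i : 'I_k) (x : X) : x != x0 -> x \in reset (trans_at i) ->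
    Gsigma (col_next i, x0) (col_next i, x) wzero
| GS_guard (i : 'I_k) (x y : X) (w : weight) :
    (x, y, w) \in guard (trans_at i) ->
    Gsigma (guard_vertex i x) (guard_vertex i y) w.
End Graph.
Arguments Gsigma {X} x0 sigma _ _ _.

Inductive gpath (V : Type) (E : V -> V -> weight -> Prop) : V -> V -> weight -> Prop :=
| gpath_one u w e : E u w e -> gpath E u w e
| gpath_cons u v w e1 e2 : E u v e1 -> gpath E v w e2 -> gpath E u w (wadd e1 e2).

Definition has_neg_cycle (V : Type) (E : V -> V -> weight -> Prop) : Prop :=
  exists u e, gpath E u u e /\ wneg e.

Definition canon (V : Type) (E : V -> V -> weight -> Prop) (u w : V) (e : weight) : Prop :=
  u <> w /\ gpath E u w e /\ (forall e', gpath E u w e' -> wle e e').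

(* |G_sigma| : canonical form restricted to columns 0 and k, renumbered
   false (= 0) and true (= 1). *)
Definition col01 (k : nat) (c : bool) : 'I_k.+1 := if c then ord_max else ord0.

Definition Hsigma (X : finType) (x0 : X) (sigma : seq (transition X))
    (u w : bool * X) (e : weight) : Prop :=
  canon (Gsigma x0 sigma) (col01 (size sigma) u.1, u.2) (col01 (size sigma) w.1, w.2) e.

(* Rooted trees with at most two (ordered) children, node labels in
   option (X * X) (None = T), and weighted edges. *)
Inductive tree (X : Type) :=
| Leaf of option (X * X)
| Un of option (X * X) & weight & tree X
| Bin of option (X * X) & weight & tree X & weight & tree X.
Arguments Leaf {X}.

Definition troot (X : Type) (t : tree X) : option (X * X) :=
  match t with Leaf l => l | Un l _ _ => l | Bin l _ _ _ _ => l end.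

Fixpoint tweight (X : Type) (t : tree X) : weight :=
  match t with
  | Leaf _ => wzero
  | Un _ e t1 => wadd e (tweight t1)
  | Bin _ e1 t1 e2 t2 => wadd (wadd e1 (tweight t1)) (wadd e2 (tweight t2))
  end.

Fixpoint height (X : Type) (t : tree X) : nat :=
  match t with
  | Leaf _ => 0
  | Un _ _ t1 => (height t1).+1
  | Bin _ _ t1 _ t2 => (maxn (height t1) (height t2)).+1
  end.

Fixpoint pair_leaves (X : Type) (t : tree X) : seq (X * X) :=
  match t with
  | Leaf None => [::]
  | Leaf (Some p) => [:: p]
  | Un _ _ t1 => pair_leaves t1
  | Bin _ _ t1 _ t2 => pair_leaves t1 ++ pair_leaves t2
  end.

Definition complete (X : Type) (t : tree X) : Prop := pair_leaves t = [::].

Fixpoint is_ptree (X : Type) (H : bool * X -> bool * X -> weight -> Prop)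
    (t : tree X) : Prop :=
  match t with
  | Leaf _ => True
  | Un None _ _ => False
  | Un (Some (x, y)) e t1 =>
      is_ptree H t1 /\
      ((t1 = Leaf None /\ exists c, H (c, x) (c, y) e) \/
       (exists u v c c' e1 e2, troot t1 = Some (u, v) /\ c != c' /\
          H (c, x) (c', u) e1 /\ H (c', v) (c, y) e2 /\ e = wadd e1 e2))
  | Bin None _ _ _ _ => False
  | Bin (Some (x, y)) e1 t1 e2 t2 =>
      is_ptree H t1 /\ is_ptree H t2 /\ e1 = wzero /\ e2 = wzero /\
      exists z, troot t1 = Some (x, z) /\ troot t2 = Some (z, y)
  end.

Definition ptree_sigma (X : finType) (x0 : X) (sigma : seq (transition X)) (t : tree X) :=
  is_ptree (Hsigma x0 sigma) t.

Definition is_context (X : finType) (x0 : X) (sigma : seq (transition X))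
    (x y u v : X) (t : tree X) : Prop :=
  ptree_sigma x0 sigma t /\ troot t = Some (x, y) /\ pair_leaves t = [:: (u, v)].

Definition admits_pattern (X : finType) (x0 : X) (sigma : seq (transition X)) : Prop :=
  exists x y t, is_context x0 sigma x y x y t /\ wneg (tweight t).

From mathcomp Require Import all_boot all_order all_algebra.
From mathcomp Require Import zify.
From Stdlib Require Import Classical.
Set Implicit Arguments. Unset Strict Implicit. Unset Printing Implicit Defensive.
Import Order.TTheory GRing.Theory Num.Theory.

(* If a label (x,y) repeats along a branch of a complete p-tree, the part
   between the two occurrences is an (x,y)-(x,y) context; without patterns its
   weight is nonnegative, so cutting it out does not increase the weight.
   Working bottom-up, every complete p-tree is thus dominated by one with the
   same root whose branches carry pairwise distinct labels, and such a tree has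
   height at most |X × X| = n^2.  Every edge of |G_σ| has a fixed minimal
   weight, so the weights of these bounded-height trees are bounded below and
   a lightest one exists; it is below every complete p-tree with that root. *)

Lemma wleE (a b : weight) :
  wle a b <-> (a.2 < b.2)%R \/ a.2 = b.2 /\ (a.1 || ~~ b.1).
Proof.
case: a b => [a1 a2] [b1 b2]; rewrite /wle /wlt /= xpair_eqE.
case: (ltgtP a2 b2) => [lt|gt|->]; rewrite ?eqxx /=.
- by split=> // _; left.
- by case: a1; case: b1; split=> //; case=> [|[]] //; lia.
- by case: a1; case: b1; split=> //; intuition.
Qed.

Lemma wle_refl a : wle a a.
Proof. by rewrite /wle eqxx orbT. Qed.

Lemma wle_trans a b c : wle a b -> wle b c -> wle a c.
Proof.
case: a b c => [a1 a2] [b1 b2] [c1 c2]; rewrite !wleE /=.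
case=> [ab|[ab ab1]]; case=> [bc|[bc bc1]]; try by left; lia.
by right; split; [lia | move: ab1 bc1; case: a1; case: b1].
Qed.

Lemma wle_snd a b : wle a b -> (a.2 <= b.2)%R.
Proof. by rewrite wleE => -[/ltW|[-> _]]. Qed.

Lemma wle0 a : ~ wneg a -> wle wzero a.
Proof.
case: a => a1 a2; rewrite /wneg /wlt wleE /=.
case: (ltgtP a2 0%R) => [neg|pos|->] nneg; [by case: nneg | by left |].
by right; split=> //; case: a1 nneg.
Qed.

Lemma add0w a : wadd wzero a = a.
Proof. by case: a => a1 a2; rewrite /wadd /= add0r. Qed.

Lemma addwC a b : wadd a b = wadd b a.
Proof. by rewrite /wadd orbC addrC. Qed.

Lemma addwA a b c : wadd a (wadd b c) = wadd (wadd a b) c.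
Proof. by rewrite /wadd /= orbA addrA. Qed.

Lemma addwAC a b c : wadd (wadd a b) c = wadd (wadd a c) b.
Proof. by rewrite -!addwA [wadd b c]addwC. Qed.

Lemma wle_add2l c a b : wle a b -> wle (wadd c a) (wadd c b).
Proof.
case: a b c => [a1 a2] [b1 b2] [c1 c2]; rewrite !wleE /wadd /=.
case=> [ab|[ab ab1]]; first by left; lia.
by right; split; [lia | move: ab1; case: a1; case: b1; case: c1].
Qed.

Lemma wle_add2r c a b : wle a b -> wle (wadd a c) (wadd b c).
Proof. by rewrite ![wadd _ c]addwC; apply: wle_add2l. Qed.

Lemma nat_min_exists (P : nat -> Prop) : (exists k, P k) ->
  exists k, P k /\ forall j, P j -> (k <= j)%N.
Proof.
move=> [k Pk]; elim/ltn_ind: k Pk => k IH Pk.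
case: (classic (exists j, P j /\ (j < k)%N)) => [[j [Pj ltjk]]|nlt].
  exact: IH ltjk Pj.
by exists k; split=> // j Pj; rewrite leqNgt; apply/negP => ltjk; apply: nlt; exists j.
Qed.

(* Weights are well-founded from below once their integer parts are bounded:
   first minimise the integer part, then prefer a strict weight. *)
Lemma wle_min_exists (T : Type) (S : T -> Prop) (f : T -> weight) (b : int) :
  (forall t, S t -> (b <= (f t).2)%R) -> (exists t, S t) ->
  exists2 m, S m & forall t, S t -> wle (f m) (f t).
Proof.
move=> lb [t0 St0].
pose P k := exists2 t, S t & (f t).2 = (b + k%:Z)%R.
have Pf t : S t -> P (absz ((f t).2 - b)%R) by move=> St; exists t => //; have := lb t St; lia.
have [k [[tk Stk ftk] kmin]] := nat_min_exists (ex_intro _ _ (Pf t0 St0)).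
have [m [Sm fm mstrict]] : exists m, [/\ S m, (f m).2 = (b + k%:Z)%R &
    forall t, S t -> (f t).2 = (f m).2 -> (f t).1 -> (f m).1].
  case: (classic (exists2 t, S t /\ (f t).2 = (b + k%:Z)%R & (f t).1)).
    by move=> [t [St ft] ft1]; exists t; split=> // ? _ _ _; rewrite ft1.
  move=> nstrict; exists tk; split=> // t St ft ft1.
  by case: nstrict; exists t; rewrite -?ftk.
exists m => // t St; apply/wleE.
have := kmin _ (Pf t St); have := lb t St.
case: (ltgtP (f m).2 (f t).2) => [lt|gt|eq] *; [by left | lia |].
by right; split=> //; case ft1: (f t).1; rewrite ?orbT // (mstrict t).
Qed.

Lemma fin_lower_bound (T : finType) (B : T -> int -> Prop) :
  (forall i, exists b, forall z, B i z -> (b <= z)%R) ->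
  exists N : nat, forall i z, B i z -> (- N%:Z <= z)%R.
Proof.
move=> /fin_all_exists [b lb]; exists (\sum_i absz (b i))%N => i z Biz.
have := lb i z Biz; rewrite (bigD1 i) //=; lia.
Qed.

Lemma minimal_weights_lower_bound (T : finType) (R : T -> T -> weight -> Prop) :
  (forall u v e e', R u v e -> R u v e' -> wle e e') ->
  exists N : nat, forall u v e, R u v e -> (- N%:Z <= e.2)%R.
Proof.
move=> Rmin; have [|N lb] := @fin_lower_bound _ (fun uv z => exists2 e, R uv.1 uv.2 e & e.2 = z).
  case=> u v; case: (classic (exists e, R u v e)) => [[e0 Re0]|none].
    by exists e0.2 => z [e Re <-]; apply/wle_snd/(Rmin _ _ _ _ Re0 Re).
  by exists 0%R => z [e Re]; case: none; exists e.
by exists N => u v e Re; apply: (lb (u, v)); exists e.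
Qed.

Lemma card_cons (T : finType) (p : T) (l : seq T) : #|p :: l| = (p \notin l) + #|l|.
Proof. by rewrite -cardU1; apply: eq_card => q; rewrite !inE. Qed.

Section PTrees.
Variables (X : finType) (H : bool * X -> bool * X -> weight -> Prop).

Lemma complete_bin l e1 (t1 : tree X) e2 t2 :
  complete (Bin l e1 t1 e2 t2) <-> complete t1 /\ complete t2.
Proof. by rewrite /complete /=; case: (pair_leaves t1) => [|? ?]; split=> // -[]. Qed.

Inductive subtree (s : tree X) : tree X -> Prop :=
| subtree_refl : subtree s s
| subtree_un l e t : subtree s t -> subtree s (Un l e t)
| subtree_binl l e1 t1 e2 t2 : subtree s t1 -> subtree s (Bin l e1 t1 e2 t2)
| subtree_binr l e1 t1 e2 t2 : subtree s t2 -> subtree s (Bin l e1 t1 e2 t2).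

Lemma subtree_ptree s t : subtree s t -> is_ptree H t -> is_ptree H s.
Proof.
elim=> [|[[x y]|] e t1 _ IH|[[x y]|] e1 t1 e2 t2 _ IH|[[x y]|] e1 t1 e2 t2 _ IH] //=.
- by case=> /IH.
- by case=> /IH.
- by case=> _ [/IH].
Qed.

Lemma subtree_complete s t : subtree s t -> complete t -> complete s.
Proof.
elim=> [|l e t1 _ IH|l e1 t1 e2 t2 _ IH|l e1 t1 e2 t2 _ IH] //.
- by case/complete_bin=> ct1 _; apply: IH.
- by case/complete_bin=> _ ct2; apply: IH.
Qed.

Lemma subtree_context s t p : subtree s t -> is_ptree H t -> complete t ->
  troot s = Some p ->
  exists c, [/\ is_ptree H c, troot c = troot t, pair_leaves c = [:: p] &
             tweight t = wadd (tweight c) (tweight s)].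
Proof.
elim=> [|[[x y]|] e t1 s1 IH|[[x y]|] e1 t1 e2 t2 s1 IH|[[x y]|] e1 t1 e2 t2 s2 IH] //=.
- by move=> _ _ ->; exists (Leaf (Some p)); rewrite add0w.
- move=> [pt1 edge] ct1 rs; have [c [pc rc lc wc]] := IH pt1 ct1 rs.
  exists (Un (Some (x, y)) e c); split=> //=; last by rewrite wc addwA.
  split=> //; case: edge => [[t1T _]|]; last by rewrite rc; right.
  by rewrite t1T in s1; inversion s1; subst.
- move=> [pt1 [pt2 [-> [-> [z [r1 r2]]]]]] /complete_bin[ct1 ct2] rs.
  have [c [pc rc lc wc]] := IH pt1 ct1 rs.
  exists (Bin (Some (x, y)) wzero c wzero t2); split=> //=.
  + by do 4 split=> //; exists z; rewrite rc.
  + by rewrite lc ct2.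
  + by rewrite wc [wadd wzero _]addwA addwAC.
- move=> [pt1 [pt2 [-> [-> [z [r1 r2]]]]]] /complete_bin[ct1 ct2] rs.
  have [c [pc rc lc wc]] := IH pt2 ct2 rs.
  exists (Bin (Some (x, y)) wzero t1 wzero c); split=> //=.
  + by do 4 split=> //; exists z; rewrite rc.
  + by rewrite lc ct1.
  + by rewrite wc !addwA.
Qed.

Definition olabel (l : option (X * X)) : seq (X * X) :=
  if l is Some p then [:: p] else [::].

Fixpoint labels (t : tree X) : seq (X * X) :=
  match t with
  | Leaf _ => [::]
  | Un l _ t1 => olabel l ++ labels t1
  | Bin l _ t1 _ t2 => olabel l ++ labels t1 ++ labels t2
  end.

Lemma labels_subtree t p : p \in labels t -> exists2 s, subtree s t & troot s = Some p.
Proof.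
elim: t => [l|l e t1 IH|l e1 t1 IH1 e2 t2 IH2] //=; rewrite !mem_cat.
- case/orP=> [|/IH[s st rs]]; last by exists s => //; constructor.
  by case: l => //= q; rewrite inE => /eqP->; exists (Un (Some q) e t1) => //; constructor.
- case/or3P=> [|/IH1[s st rs]|/IH2[s st rs]].
  + by case: l => //= q; rewrite inE => /eqP->; exists (Bin (Some q) e1 t1 e2 t2) => //; constructor.
  + by exists s => //; apply: subtree_binl.
  + by exists s => //; apply: subtree_binr.
Qed.

Fixpoint uniq_branches (t : tree X) : Prop :=
  match t with
  | Leaf _ => True
  | Un (Some p) _ t1 => p \notin labels t1 /\ uniq_branches t1
  | Bin (Some p) _ t1 _ t2 =>
      [/\ p \notin labels t1 ++ labels t2, uniq_branches t1 & uniq_branches t2]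
  | _ => False
  end.

Lemma uniq_branches_subtree s t : subtree s t -> uniq_branches t -> uniq_branches s.
Proof.
elim=> [|[p|] e t1 _ IH|[p|] e1 t1 e2 t2 _ IH|[p|] e1 t1 e2 t2 _ IH] //=.
- by case=> _ /IH.
- by case=> _ /IH.
- by case=> _ _ /IH.
Qed.

Lemma height_uniq_branches t : uniq_branches t -> (height t <= #|labels t|)%N.
Proof.
elim: t => [l|[p|] e t1 IH|[p|] e1 t1 IH1 e2 t2 IH2] //=.
- by case=> /negPf p_new /IH; rewrite card_cons p_new.
- case=> p_new /IH1 h1 /IH2 h2; rewrite card_cons p_new /= ltnS geq_max.
  by rewrite (leq_trans h1) ?(leq_trans h2) // subset_leq_card //;
     apply/subsetP => q; rewrite mem_cat => ->; rewrite ?orbT.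
Qed.

End PTrees.

Section Shortening.
Variables (X : finType) (H : bool * X -> bool * X -> weight -> Prop).
Hypothesis no_pattern : forall x y c, is_ptree H c -> troot c = Some (x, y) ->
  pair_leaves c = [:: (x, y)] -> ~ wneg (tweight c).

Lemma repeated_root_lighter s t p : is_ptree H t -> complete t -> troot t = Some p ->
  subtree s t -> troot s = Some p -> wle (tweight s) (tweight t).
Proof.
case: p => x y pt ct rt st rs.
have [c [pc rc lc ->]] := subtree_context st pt ct rs.
rewrite -{1}[tweight s]add0w; apply/wle_add2r/wle0/(no_pattern pc _ lc).
by rewrite rc.
Qed.

Definition shortening (t t' : tree X) :=
  [/\ is_ptree H t', complete t', troot t' = troot t, uniq_branches t' &
      wle (tweight t') (tweight t)].

Lemma shortening_cases t N p : is_ptree H N -> complete N -> troot N = troot t ->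
  troot t = Some p -> wle (tweight N) (tweight t) ->
  uniq_branches N \/ (exists2 s, subtree s N & troot s = Some p /\ uniq_branches s) ->
  exists t', shortening t t'.
Proof.
move=> pN cN rN rt wN [uN|[s sN [rs us]]]; first by exists N.
exists s; split; [exact: subtree_ptree pN | exact: subtree_complete cN | by rewrite rs |
                  by [] | ].
by apply: wle_trans wN; apply: (repeated_root_lighter pN cN _ sN rs); rewrite rN.
Qed.

Lemma shortening_exists t : is_ptree H t -> complete t -> exists t', shortening t t'.
Proof.
elim: t => [l|[[x y]|] e t1 IH|[[x y]|] e1 t1 IH1 e2 t2 IH2] //=.
- by move=> _ cl; exists (Leaf l); split=> //; apply: wle_refl.
- move=> [pt1 [[t1T edge]|edge]] ct.
    exists (Un (Some (x, y)) e t1); rewrite t1T in pt1 *.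
    by split=> //; [split=> //; left | exact: wle_refl].
  have [t1' [p1 c1 r1 u1 w1]] := IH pt1 ct.
  pose N := Un (Some (x, y)) e t1'.
  apply: (@shortening_cases _ N (x, y)) => //; [by split=> //; right; rewrite r1 |
    exact: wle_add2l |].
  case: (boolP ((x, y) \in labels t1')) => [rep|new]; last by left.
  have [s st1 rs] := labels_subtree rep.
  by right; exists s; [apply: subtree_un | split=> //; apply: uniq_branches_subtree u1].
- move=> [pt1 [pt2 [-> [-> [z [r1 r2]]]]]] /complete_bin[ct1 ct2].
  have [t1' [p1 c1 r1' u1 w1]] := IH1 pt1 ct1.
  have [t2' [p2 c2 r2' u2 w2]] := IH2 pt2 ct2.
  pose N := Bin (Some (x, y)) wzero t1' wzero t2'.
  apply: (@shortening_cases _ N (x, y)) => //.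
  + by do 4 split=> //; exists z; rewrite r1' r2'.
  + exact/complete_bin.
  + exact: wle_trans (wle_add2r _ (wle_add2l _ w1)) (wle_add2l _ (wle_add2l _ w2)).
  case: (boolP ((x, y) \in labels t1' ++ labels t2')) => [rep|new]; last by left.
  right; rewrite mem_cat in rep; case/orP: rep => [/labels_subtree[s st rs]|/labels_subtree[s st rs]].
  + by exists s; [apply: subtree_binl | split=> //; apply: uniq_branches_subtree u1].
  + by exists s; [apply: subtree_binr | split=> //; apply: uniq_branches_subtree u2].
Qed.

End Shortening.

Lemma ptree_weight_lower_bound (X : finType) (H : bool * X -> bool * X -> weight -> Prop)
    (N : nat) (t : tree X) :
  (forall u v e, H u v e -> (- N%:Z <= e.2)%R) -> is_ptree H t ->
  (- (2 * N * 2 ^ height t)%N%:Z <= (tweight t).2)%R.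
Proof.
move=> Hlb; elim: t => [l|[[x y]|] e t1 IH|[[x y]|] e1 t1 IH1 e2 t2 IH2] //=.
- by move=> _; lia.
- move=> [/IH lb1 edge].
  have lb_e : (- (2 * N)%N%:Z <= e.2)%R.
    case: edge => [[_ [c /Hlb]]|[u [v [c [c' [f1 [f2 [_ [_ [/Hlb h1 [/Hlb h2 ->]]]]]]]]]]].
      by lia.
    by rewrite /wadd /=; lia.
  have : (1 <= 2 ^ height t1)%N by rewrite expn_gt0.
  move: lb1 lb_e; rewrite expnS /wadd /=; set M := (2 ^ height t1)%N; nia.
- move=> [/IH1 lb1 [/IH2 lb2 [-> [-> _]]]].
  have le1 : (2 ^ height t1 <= 2 ^ maxn (height t1) (height t2))%N
    by rewrite leq_pexp2l ?leq_maxl.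
  have le2 : (2 ^ height t2 <= 2 ^ maxn (height t1) (height t2))%N
    by rewrite leq_pexp2l ?leq_maxr.
  move: lb1 lb2 le1 le2; rewrite expnS /wadd /=.
  set M1 := (2 ^ height t1)%N; set M2 := (2 ^ height t2)%N; set M := (2 ^ maxn _ _)%N.
  nia.
Qed.

Theorem mainTheorem17 (X : finType) (x0 : X) (sigma : seq (transition X)) :
  ~ has_neg_cycle (Gsigma x0 sigma) ->
  ~ admits_pattern x0 sigma ->
  forall x y : X,
    (exists t, ptree_sigma x0 sigma t /\ complete t /\ troot t = Some (x, y)) ->
    exists t, [/\ ptree_sigma x0 sigma t, complete t, troot t = Some (x, y),
               (height t <= #|X| ^ 2)%N &
               forall t', ptree_sigma x0 sigma t' -> complete t' ->
                          troot t' = Some (x, y) -> wle (tweight t) (tweight t')].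
Proof.
move=> _ nopat x y [t0 [pt0 [ct0 rt0]]].
rewrite /ptree_sigma in pt0 *; set H := Hsigma x0 sigma in pt0 *.
have no_pattern a b c : is_ptree H c -> troot c = Some (a, b) ->
    pair_leaves c = [:: (a, b)] -> ~ wneg (tweight c).
  by move=> pc rc lc neg; apply: nopat; exists a, b, c.
have [N edge_lb] : exists N : nat, forall u v e, H u v e -> (- N%:Z <= e.2)%R.
  by apply: minimal_weights_lower_bound => u v e e' [_ [_ e_min]] [_ [e'_path _]]; apply: e_min.
have height_le (t : tree X) : uniq_branches t -> (height t <= #|X| ^ 2)%N.
  move=> ut; apply: leq_trans (height_uniq_branches ut) _.
  by rewrite -mulnn -card_prod; apply: max_card.
pose S t := [/\ is_ptree H t, complete t, troot t = Some (x, y) & uniq_branches t].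
have [m [pm cm rm um] m_min] : exists2 m, S m & forall t, S t -> wle (tweight m) (tweight t).
  apply: (@wle_min_exists _ S (@tweight X) (- (2 * N * 2 ^ (#|X| ^ 2))%N%:Z)).
    move=> t [pt _ _ /height_le ht]; apply: le_trans (ptree_weight_lower_bound edge_lb pt).
    by rewrite lerN2 lez_nat leq_mul2l leq_pexp2l ?ht ?orbT.
  have [t1 [p1 c1 r1 u1 _]] := shortening_exists no_pattern pt0 ct0.
  by exists t1; split=> //; rewrite r1.
exists m; split=> // [|t' pt' ct' rt']; first exact: height_le.
have [t'' [p'' c'' r'' u'' w'']] := shortening_exists no_pattern pt' ct'.
by apply: wle_trans (m_min t'' _) w''; split=> //; rewrite r''.
Qed.
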